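(* Let $R_1,R_2$ be commutative rings with nonzero identity, $I_1$ an ideal of $R_1$, $I_2$ an ideal of $R_2$, $R=R_1\times R_2$ and $I=I_1\times I_2$. (a) Let $x\in R_1$ and $y_1,y_2\in R_2$. Then $(x,y_1)$ is adjacent to $(x,y_2)$ in $\Gamma''_I(R)$ if and only if $y_1$ is adjacent to $y_2$ in $\Gamma''_{I_2}(R_2)$. (b) Let $x_1,x_2\in R_1$ and $y\in R_2$. Then $(x_1,y)$ is adjacent to $(x_2,y)$ in $\Gamma''_I(R)$ if and only if $x_1$ is adjacent to $x_2$ in $\Gamma''_{I_1}(R_1)$.
   Context: $R_1\times R_2$ has componentwise operations. For a commutative ring $S$ and an ideal $J$ of $S$, $\Gamma''_J(S)$ is the simple undirected graph whose vertex set is $\{x\in S\setminus J : xS+J\neq S\}$, with distinct vertices $x,y$ adjacent if and only if $x\notin yS+J$ and $y\notin xS+J$. *)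

From mathcomp Require Import all_boot all_algebra.
Set Implicit Arguments. Unset Strict Implicit. Unset Printing Implicit Defensive.
Import GRing.Theory.
Local Open Scope ring_scope.

Definition is_ideal (S : comNzRingType) (J : S -> Prop) : Prop :=
  [/\ J 0, (forall a b, J a -> J b -> J (a - b)) & (forall r a, J a -> J (r * a))].

Definition principal_plus (S : comNzRingType) (J : S -> Prop) (x : S) : S -> Prop :=
  fun z => exists s j, J j /\ z = x * s + j.

(* Vertex set of Gamma''_J(S): x \notin J and xS + J <> S. *)
Definition gvertex (S : comNzRingType) (J : S -> Prop) (x : S) : Prop :=
  ~ J x /\ ~ (forall z, principal_plus J x z).

Definition gadj (S : comNzRingType) (J : S -> Prop) (x y : S) : Prop :=
  [/\ gvertex J x, gvertex J y, x <> y,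
      ~ principal_plus J y x & ~ principal_plus J x y].

Definition prod_ideal (R1 R2 : comNzRingType) (I1 : R1 -> Prop) (I2 : R2 -> Prop)
  : (R1 * R2)%type -> Prop := fun p => I1 p.1 /\ I2 p.2.

(* Membership in (a, b)R + I is decided componentwise, and x always lies in
   xR1 + I1 (only 0 \in I1 is needed).  Hence, for two vertices sharing their
   first coordinate, each of the adjacency conditions reduces to the
   corresponding condition on the second coordinates, and symmetrically. *)
From mathcomp Require Import all_boot all_algebra.
From Stdlib Require Import Setoid.
Local Open Scope ring_scope.
Import GRing.Theory.
Set Implicit Arguments. Unset Strict Implicit.

Lemma principal_plus_refl (S : comNzRingType) (J : S -> Prop) (a : S) :
  J 0 -> principal_plus J a a.
Proof. by move=> J0; exists 1, 0; rewrite mulr1 addr0. Qed.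

(* As [J] contains [0], the vertex conditions are implied by the two
   non-memberships: [a \in J] would give [a \in bS + J], and [aS + J = S]
   would give [b \in aS + J]. *)
Lemma gadjE (S : comNzRingType) (J : S -> Prop) (a b : S) : J 0 ->
  gadj J a b <-> [/\ a <> b, ~ principal_plus J b a & ~ principal_plus J a b].
Proof.
move=> J0; split=> [[] // | [ab nba nab]].
have in_J_pp c d : J c -> principal_plus J d c.
  by move=> Jc; exists 0, c; rewrite mulr0 add0r.
split=> //; split.
- by move/(in_J_pp _ b).
- by move/(_ b).
- by move/(in_J_pp _ a).
- by move/(_ a).
Qed.

Lemma gadj_transfer (S T : comNzRingType) (J : S -> Prop) (K : T -> Prop)
    (a b : S) (c d : T) : J 0 -> K 0 ->
  (a = b <-> c = d) ->
  (principal_plus J a b <-> principal_plus K c d) ->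
  (principal_plus J b a <-> principal_plus K d c) ->
  gadj J a b <-> gadj K c d.
Proof.
move=> J0 K0 eq_ac pp_ab pp_ba.
split=> [/(gadjE _ _ J0) | /(gadjE _ _ K0)] [neq n21 n12];
  [apply/(gadjE _ _ K0) | apply/(gadjE _ _ J0)]; split;
  by [move/eq_ac/neq | move/pp_ba/n21 | move/pp_ab/n12].
Qed.

Lemma principal_plus_prod (R1 R2 : comNzRingType) (I1 : R1 -> Prop) (I2 : R2 -> Prop)
  (a c : R1) (b d : R2) :
  principal_plus (prod_ideal I1 I2) ((a, b) : (R1 * R2)%type) (c, d) <->
  principal_plus I1 a c /\ principal_plus I2 b d.
Proof.
split=> [[[s1 s2] [[j1 j2] [[/= J1 J2] [-> ->]]]] | ].
  by split; [exists s1, j1 | exists s2, j2].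
case=> [[s1 [j1 [J1 ->]]] [s2 [j2 [J2 ->]]]].
by exists (s1, s2), (j1, j2).
Qed.

Section ProductGraph.

Variables (R1 R2 : comNzRingType) (I1 : R1 -> Prop) (I2 : R2 -> Prop).
Hypotheses (I1_0 : I1 0) (I2_0 : I2 0).

Let I_0 : prod_ideal I1 I2 0. Proof. by []. Qed.

Lemma gadj_prod_snd (x : R1) (y1 y2 : R2) :
  gadj (prod_ideal I1 I2) ((x, y1) : (R1 * R2)%type) (x, y2) <-> gadj I2 y1 y2.
Proof.
have x_x := principal_plus_refl x I1_0.
apply: gadj_transfer I_0 I2_0 _ _ _; rewrite ?principal_plus_prod.
- by split=> [[] | ->].
- tauto.
- tauto.
Qed.

Lemma gadj_prod_fst (x1 x2 : R1) (y : R2) :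
  gadj (prod_ideal I1 I2) ((x1, y) : (R1 * R2)%type) (x2, y) <-> gadj I1 x1 x2.
Proof.
have y_y := principal_plus_refl y I2_0.
apply: gadj_transfer I_0 I1_0 _ _ _; rewrite ?principal_plus_prod.
- by split=> [[] | ->].
- tauto.
- tauto.
Qed.

End ProductGraph.

Theorem lemma2p3 (R1 R2 : comNzRingType) (I1 : R1 -> Prop) (I2 : R2 -> Prop)
  (hI1 : is_ideal I1) (hI2 : is_ideal I2) :
  (forall (x : R1) (y1 y2 : R2),
     gadj (prod_ideal I1 I2) ((x, y1) : (R1 * R2)%type) (x, y2) <-> gadj I2 y1 y2) /\
  (forall (x1 x2 : R1) (y : R2),
     gadj (prod_ideal I1 I2) ((x1, y) : (R1 * R2)%type) (x2, y) <-> gadj I1 x1 x2).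
Proof.
case: hI1 hI2 => [I1_0 _ _] [I2_0 _ _].
by split; [exact: gadj_prod_snd | exact: gadj_prod_fst].
Qed.
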